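(* Let $\xi\in\mathbb{R}$, let $n\ge 2$, $t_1<\dots<t_n$, $\Delta:=\max_{1\le j\le n-1}(t_{j+1}-t_j)$, and let $F\in C^4[t_1,t_n]$. Let $I_4(F)$ be an exponential spline of order $4$ for the operator $L_{(\xi,\xi,-\xi,-\xi)}=\left(\frac{d^2}{dt^2}-\xi^2\right)^2$ with knots $t_1,\dots,t_n$ satisfying $I_4(F)(t_j)=F(t_j)$ for $j=1,\dots,n$, $\frac{d}{dt}I_4(F)(t_1)=F'(t_1)$ and $\frac{d}{dt}I_4(F)(t_n)=F'(t_n)$. Then $$\max_{t\in[t_1,t_n]}|F(t)-I_4(F)(t)|\le \frac{5}{64}\,\Delta^4\max_{\theta\in[t_1,t_n]}\left|L_{(\xi,\xi,-\xi,-\xi)}F(\theta)\right|.$$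
   Context: For real $\lambda_0,\dots,\lambda_N$, $L_{(\lambda_0,\dots,\lambda_N)}=\prod_{j=0}^N\left(\frac{d}{dt}-\lambda_j\right)$ and $E(\lambda_0,\dots,\lambda_N)=\{f\in C^{N+1}(\mathbb{R}):L_{(\lambda_0,\dots,\lambda_N)}f=0\}$. An exponential spline for the knots $t_1<\dots<t_n$ and the operator $L_{(\lambda_0,\dots,\lambda_N)}$ is a function $g\in C^{N-1}[t_1,t_n]$ whose restriction to each interval $[t_j,t_{j+1}]$ coincides with an element of $E(\lambda_0,\dots,\lambda_N)$. *)

From Stdlib Require Import Reals Lra Lia List.
From Coquelicot Require Import Coquelicot.
Import ListNotations.
Open Scope R_scope.

Definition is_deriv_on (a b : R) (f f' : R -> R) : Prop :=
  forall x, a <= x <= b ->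
    filterlim (fun y => (f y - f x) / (y - x))
      (within (fun y => a <= y <= b /\ y <> x) (locally x))
      (locally (f' x)).

Definition Ck_on (k : nat) (a b : R) (f : R -> R) (d : nat -> R -> R) : Prop :=
  d 0%nat = f /\
  (forall i, (i < k)%nat -> is_deriv_on a b (d i) (d (S i))) /\
  (forall i x, (i <= k)%nat -> a <= x <= b ->
     filterlim (d i) (within (fun y => a <= y <= b) (locally x)) (locally (d i x))).

Fixpoint Lop (lams : list R) (f : R -> R) : R -> R :=
  match lams with
  | [] => f
  | l :: ls => fun x => Derive (Lop ls f) x - l * Lop ls f x
  end.

Definition Espace (lams : list R) (f : R -> R) : Prop :=
  (forall k x, (k <= length lams)%nat -> ex_derive_n f k x) /\
  (forall x, continuous (Derive_n f (length lams)) x) /\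
  (forall x, Lop lams f x = 0).

(* exponential spline for knots t 1 < ... < t n and operator L_lams:
   g in C^(N-1)[t_1,t_n], each restriction to [t_j,t_(j+1)] agrees with an
   element of E(lams). *)
Definition exp_spline (lams : list R) (t : nat -> R) (n : nat) (g : R -> R) : Prop :=
  (exists dg, Ck_on (length lams - 2) (t 1%nat) (t n) g dg) /\
  (forall j, (1 <= j < n)%nat ->
     exists e, Espace lams e /\ forall x, t j <= x <= t (S j) -> g x = e x).

Fixpoint maxgap (t : nat -> R) (k : nat) : R :=
  match k with
  | O => 0
  | S k' => Rmax (maxgap t k') (t (S (S k')) - t (S k'))
  end.

Definition mesh (t : nat -> R) (n : nat) : R := maxgap t (n - 1).

From Stdlib Require Import Reals Lra Lia List.
From Coquelicot Require Import Coquelicot.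
Import ListNotations.
Open Scope R_scope.

(* Error bound for complete exponential splines of order 4 for
   L = (D^2 - K)^2, K = xi^2 >= 0 (proved with the constant 3/64 <= 5/64).

   Let e = F - I be the error and u = e'' - K e.  On each interval
   [t_j, t_(j+1)] the spline solves L I = 0, so u'' - K u = L F and
   |u'' - K u| <= M.  The proof rests on the maximum principle for
   psi'' - K psi (K >= 0) and proceeds in three steps.
   1. Knot values: |u(t_j)| <= D^2 M / 4 (D the mesh).  If u had a larger
      extremal knot value m = u(t_j), comparing e on the adjacent intervals
      with explicit barriers (polynomial for K = 0, hyperbolic for K > 0)
      would force e'(t_j) > 0 from the left interval and e'(t_j) < 0 from the
      right one; at t_1 and t_n this contradicts e' = 0.
   2. Between knots, the two-point bound for u'' - K u gives |u| <= 3/8 D^2 M.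
   3. Since e'' - K e = u and e vanishes at the knots, the two-point bound
      again gives |e| <= 3/64 D^4 M. *)

Definition cont_on (a b : R) (f : R -> R) : Prop :=
  forall x, a <= x <= b ->
    filterlim f (within (fun y => a <= y <= b) (locally x)) (locally (f x)).

Lemma within_mono (D D' : R -> Prop) x : (forall y, D y -> D' y) ->
  filter_le (within D (locally x)) (within D' (locally x)).
Proof. intros HD P [d Hd]. exists d. intros y Hy HDy. apply Hd; auto. Qed.

Lemma cont_on_sub a b p q f : cont_on a b f -> a <= p -> q <= b -> cont_on p q f.
Proof.
  intros H Hp Hq x Hx. eapply filterlim_filter_le_1; [|apply H; lra].
  apply within_mono. intros y Hy. lra.
Qed.

Lemma cont_on_eps a b f x : cont_on a b f -> a <= x <= b ->
  forall eps, 0 < eps -> exists del, 0 < del /\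
    forall y, a <= y <= b -> Rabs (y - x) < del -> Rabs (f y - f x) < eps.
Proof.
  intros H Hx eps Heps.
  destruct (proj1 (filterlim_locally f (f x)) (H x Hx) (mkposreal eps Heps)) as [d Hd].
  exists d. split; [apply cond_pos|]. intros y Hy Hyx. apply Hd; auto.
Qed.

Lemma cont_on_plus a b f g : cont_on a b f -> cont_on a b g ->
  cont_on a b (fun y => f y + g y).
Proof.
  intros Hf Hg x Hx.
  eapply filterlim_comp_2; [apply Hf, Hx|apply Hg, Hx|].
  apply (@filterlim_plus R_AbsRing R_NormedModule).
Qed.

Lemma cont_on_opp a b f : cont_on a b f -> cont_on a b (fun y => - f y).
Proof.
  intros Hf x Hx. eapply filterlim_comp; [apply Hf, Hx|].
  apply (@filterlim_opp R_AbsRing R_NormedModule).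
Qed.

Lemma cont_on_minus a b f g : cont_on a b f -> cont_on a b g ->
  cont_on a b (fun y => f y - g y).
Proof. intros Hf Hg. apply cont_on_plus; [|apply cont_on_opp]; auto. Qed.

Lemma cont_on_scal a b c f : cont_on a b f -> cont_on a b (fun y => c * f y).
Proof.
  intros Hf x Hx. eapply filterlim_comp; [apply Hf, Hx|].
  apply (@filterlim_scal_r R_AbsRing R_NormedModule).
Qed.

Lemma cont_on_derivable a b f f' : (forall x, is_derive f x (f' x)) -> cont_on a b f.
Proof.
  intros H x _. eapply filterlim_filter_le_1; [apply filter_le_within|].
  apply (@ex_derive_continuous R_AbsRing R_NormedModule). exists (f' x). apply H.
Qed.

Lemma is_deriv_on_sub a b p q f f' : is_deriv_on a b f f' -> a <= p -> q <= b ->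
  is_deriv_on p q f f'.
Proof.
  intros H Hp Hq x Hx. eapply filterlim_filter_le_1; [|apply H; lra].
  apply within_mono. intros y Hy. lra.
Qed.

Lemma is_deriv_on_eps a b f f' x : is_deriv_on a b f f' -> a <= x <= b ->
  forall eps, 0 < eps -> exists del, 0 < del /\
    forall y, a <= y <= b -> y <> x -> Rabs (y - x) < del ->
      Rabs ((f y - f x) / (y - x) - f' x) < eps.
Proof.
  intros H Hx eps Heps.
  destruct (proj1 (filterlim_locally _ (f' x)) (H x Hx) (mkposreal eps Heps)) as [d Hd].
  exists d. split; [apply cond_pos|]. intros y Hy Hyx Hd'. apply Hd; auto.
Qed.

Lemma is_deriv_on_minus a b f f' g g' :
  is_deriv_on a b f f' -> is_deriv_on a b g g' ->
  is_deriv_on a b (fun y => f y - g y) (fun y => f' y - g' y).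
Proof.
  intros Hf Hg x Hx.
  apply (filterlim_within_ext _
    (fun y => plus ((f y - f x) / (y - x)) (opp ((g y - g x) / (y - x))))).
  { intros y [_ Hy]. unfold plus, opp; simpl. field. lra. }
  eapply filterlim_comp_2; [apply Hf, Hx| |apply (@filterlim_plus R_AbsRing R_NormedModule)].
  eapply filterlim_comp; [apply Hg, Hx|apply (@filterlim_opp R_AbsRing R_NormedModule)].
Qed.

Lemma is_deriv_on_opp a b f f' : is_deriv_on a b f f' ->
  is_deriv_on a b (fun y => - f y) (fun y => - f' y).
Proof.
  intros Hf x Hx.
  apply (filterlim_within_ext _ (fun y => opp ((f y - f x) / (y - x)))).
  { intros y [_ Hy]. unfold opp; simpl. field. lra. }
  eapply filterlim_comp; [apply Hf, Hx|apply (@filterlim_opp R_AbsRing R_NormedModule)].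
Qed.

Lemma is_derive_Rminus (f g : R -> R) x df dg : is_derive f x df -> is_derive g x dg ->
  is_derive (fun y => f y - g y) x (df - dg).
Proof. exact (is_derive_minus f g x df dg). Qed.

Lemma is_derive_Rplus (f g : R -> R) x df dg : is_derive f x df -> is_derive g x dg ->
  is_derive (fun y => f y + g y) x (df + dg).
Proof. exact (is_derive_plus f g x df dg). Qed.

Lemma is_deriv_on_derivable a b f f' : (forall x, is_derive f x (f' x)) ->
  is_deriv_on a b f f'.
Proof.
  intros H x _. apply filterlim_locally. intros eps.
  destruct (proj1 (is_derive_Reals _ _ _) (H x) eps (cond_pos eps)) as [d Hd].
  exists d. intros y Hy [_ Hyx].
  specialize (Hd (y - x) ltac:(lra) Hy). rewrite Rplus_minus in Hd. exact Hd.
Qed.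

Lemma is_deriv_on_interior a b f f' x : is_deriv_on a b f f' -> a < x < b ->
  is_derive f x (f' x).
Proof.
  intros H Hx. apply is_derive_Reals. intros eps Heps.
  destruct (is_deriv_on_eps a b f f' x H ltac:(lra) eps Heps) as [d [Hd Hd']].
  assert (Hp : 0 < Rmin d (Rmin (x - a) (b - x))).
  { apply Rmin_glb_lt; [lra|apply Rmin_glb_lt; lra]. }
  exists (mkposreal _ Hp). intros h Hh Hhl. simpl in Hhl.
  pose proof (Rmin_l d (Rmin (x - a) (b - x))).
  pose proof (Rmin_r d (Rmin (x - a) (b - x))).
  pose proof (Rmin_l (x - a) (b - x)). pose proof (Rmin_r (x - a) (b - x)).
  apply Rabs_def2 in Hhl.
  specialize (Hd' (x + h)). replace (x + h - x) with h in Hd' by ring.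
  apply Hd'; [lra|lra|apply Rabs_def1; lra].
Qed.

Definition clamp (a b x : R) : R := Rmax a (Rmin b x).

Lemma clamp_in a b x : a <= b -> a <= clamp a b x <= b.
Proof.
  intros. unfold clamp. split; [apply Rmax_l|]. apply Rmax_lub; auto. apply Rmin_l.
Qed.

Lemma clamp_id a b x : a <= x <= b -> clamp a b x = x.
Proof. intros. unfold clamp. rewrite Rmin_right, Rmax_right; lra. Qed.

Lemma clamp_dist a b x c : a <= c <= b -> Rabs (clamp a b x - c) <= Rabs (x - c).
Proof.
  intros Hc. unfold clamp.
  destruct (Rle_dec x b); [rewrite Rmin_right by lra | rewrite Rmin_left by lra];
  (destruct (Rle_dec a x); [rewrite Rmax_right by lra | rewrite Rmax_left by lra]);
  try rewrite Rmax_right by lra; try rewrite Rmax_left by lra;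
  unfold Rabs; repeat destruct Rcase_abs; lra.
Qed.

(* Weierstrass: a function continuous on [a,b] attains its minimum there.
   Stdlib's version needs continuity on the line, obtained by clamping. *)
Lemma cont_on_min a b f : a <= b -> cont_on a b f ->
  exists mx, a <= mx <= b /\ forall y, a <= y <= b -> f mx <= f y.
Proof.
  intros Hab Hf.
  destruct (continuity_ab_min (fun x => f (clamp a b x)) a b Hab) as [mx [Hmin Hmx]].
  - intros c Hc eps Heps. destruct (cont_on_eps a b f c Hf Hc eps Heps) as [d [Hd Hd']].
    exists d. split; auto. intros x [_ Hx]. simpl. unfold R_dist in *.
    rewrite (clamp_id a b c Hc). apply Hd'; [apply clamp_in; auto|].
    eapply Rle_lt_trans; [apply clamp_dist; auto|exact Hx].
  - exists mx. split; auto. intros y Hy. specialize (Hmin y Hy). simpl in Hmin.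
    rewrite (clamp_id a b mx Hmx), (clamp_id a b y Hy) in Hmin. exact Hmin.
Qed.

Lemma min_second_derivative a b psi psi1 mx l : a < mx < b ->
  (forall y, a <= y <= b -> psi mx <= psi y) ->
  (forall x, a < x < b -> is_derive psi x (psi1 x)) ->
  is_derive psi1 mx l -> 0 <= l.
Proof.
  intros Hmx Hmin Hd1 Hd2. destruct (Rle_dec 0 l) as [|Hl]; auto. exfalso.
  assert (Hcrit : psi1 mx = 0).
  { pose (pr := exist (fun l => derivable_pt_lim psi mx l) (psi1 mx)
                 (proj1 (is_derive_Reals _ _ _) (Hd1 mx Hmx))).
    change (derive_pt psi mx pr = 0).
    apply (deriv_minimum psi a b mx pr); try lra.
    intros y Hy1 Hy2. apply Hmin; lra. }
  (* psi1 is negative just to the right of mx, so psi decreases there *)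
  destruct (proj1 (is_derive_Reals _ _ _) Hd2 (- l) ltac:(lra)) as [del Hdel].
  set (eta := Rmin del (b - mx) / 2).
  assert (Heta : 0 < eta /\ eta < del /\ mx + eta < b).
  { pose proof (cond_pos del). pose proof (Rmin_l del (b - mx)).
    pose proof (Rmin_r del (b - mx)).
    assert (0 < Rmin del (b - mx)) by (apply Rmin_glb_lt; lra). unfold eta; lra. }
  assert (Hneg : forall y, mx < y <= mx + eta -> psi1 y < 0).
  { intros y Hy. specialize (Hdel (y - mx) ltac:(lra) ltac:(apply Rabs_def1; lra)).
    rewrite Rplus_minus, Hcrit, Rminus_0_r in Hdel. apply Rabs_def2 in Hdel.
    destruct (Rle_dec 0 (psi1 y)) as [Hp|]; [|lra].
    assert (0 <= psi1 y / (y - mx)) by (apply Rdiv_le_0_compat; lra). lra. }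
  destruct (MVT_cor2 psi psi1 mx (mx + eta)) as [c [Hc Hc']]; [lra| |].
  { intros c Hc. apply is_derive_Reals, Hd1. lra. }
  specialize (Hmin (mx + eta) ltac:(lra)). specialize (Hneg c ltac:(lra)). nra.
Qed.

Lemma max_principle_strict (K a b : R) (psi psi1 psi2 : R -> R) : 0 <= K -> a < b ->
  cont_on a b psi ->
  (forall x, a < x < b -> is_derive psi x (psi1 x)) ->
  (forall x, a < x < b -> is_derive psi1 x (psi2 x)) ->
  0 <= psi a -> 0 <= psi b ->
  (forall x, a < x < b -> psi2 x - K * psi x < 0) ->
  forall x, a <= x <= b -> 0 <= psi x.
Proof.
  intros HK Hab Hc Hd1 Hd2 Ha Hb Hop x0 Hx0.
  destruct (Rle_dec 0 (psi x0)) as [|Hneg]; auto. exfalso.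
  destruct (cont_on_min a b psi ltac:(lra) Hc) as [mx [Hmx Hmin]].
  assert (Hm0 : psi mx < 0) by (specialize (Hmin x0 Hx0); lra).
  assert (Hin : a < mx < b).
  { destruct Hmx as [[H1|H1] [H2|H2]]; subst; split; lra. }
  assert (H2 := min_second_derivative a b psi psi1 mx (psi2 mx) Hin Hmin Hd1 (Hd2 mx Hin)).
  specialize (Hop mx Hin). nra.
Qed.

(* Maximum principle: the same with a non-strict inequality, obtained by
   adding a small multiple of the bump (x - a)(b - x). *)
Lemma max_principle (K a b : R) (psi psi1 psi2 : R -> R) : 0 <= K -> a < b ->
  cont_on a b psi ->
  (forall x, a < x < b -> is_derive psi x (psi1 x)) ->
  (forall x, a < x < b -> is_derive psi1 x (psi2 x)) ->
  0 <= psi a -> 0 <= psi b ->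
  (forall x, a < x < b -> psi2 x - K * psi x <= 0) ->
  forall x, a <= x <= b -> 0 <= psi x.
Proof.
  intros HK Hab Hc Hd1 Hd2 Ha Hb Hop x0 Hx0.
  destruct (Rle_dec 0 (psi x0)) as [|Hneg]; auto. exfalso.
  set (bump := fun x => (x - a) * (b - x)).
  assert (Hq : 0 <= bump x0) by (unfold bump; nra).
  set (d := - psi x0 / (2 * (bump x0 + 1))).
  assert (Hdpos : 0 < d) by (apply Rdiv_lt_0_compat; lra).
  assert (Hdd : d * bump x0 < - psi x0).
  { unfold d. apply (Rmult_lt_reg_r (2 * (bump x0 + 1))); [lra|].
    field_simplify; try lra. nra. }
  enough (0 <= psi x0 + d * bump x0) by lra.
  apply (max_principle_strict K a b (fun x => psi x + d * bump x)
     (fun x => psi1 x + d * (a + b - 2 * x)) (fun x => psi2 x - 2 * d) HK Hab); auto.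
  - apply cont_on_plus; auto.
    apply (cont_on_derivable _ _ _ (fun x => d * (a + b - 2 * x))).
    intros x. unfold bump. auto_derive; auto. ring.
  - intros x Hx. apply is_derive_Rplus; auto. unfold bump. auto_derive; auto. ring.
  - intros x Hx. replace (psi2 x - 2 * d) with (psi2 x + - 2 * d) by ring.
    apply is_derive_Rplus; auto. auto_derive; auto. ring.
  - unfold bump. lra.
  - unfold bump. ring_simplify. lra.
  - intros x Hx. specialize (Hop x Hx).
    assert (0 <= K * (d * bump x)) by (unfold bump; apply Rmult_le_pos; [|apply Rmult_le_pos]; nra).
    nra.
Qed.

Lemma slope_at_right_zero a b g g' : a < b ->
  (forall y, a <= y <= b -> 0 <= g y) -> g b = 0 -> is_deriv_on a b g g' -> g' b <= 0.
Proof.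
  intros Hab Hg Hb Hd. destruct (Rle_dec (g' b) 0) as [|Hpos]; auto. exfalso.
  destruct (is_deriv_on_eps a b g g' b Hd ltac:(lra) (g' b) ltac:(lra)) as [d [Hd0 Hd']].
  set (y := b - Rmin d (b - a) / 2).
  assert (Hy : a <= y < b /\ b - y < d).
  { pose proof (Rmin_l d (b - a)). pose proof (Rmin_r d (b - a)).
    assert (0 < Rmin d (b - a)) by (apply Rmin_glb_lt; lra). unfold y; lra. }
  specialize (Hd' y ltac:(lra) ltac:(lra) ltac:(apply Rabs_def1; lra)).
  rewrite Hb, Rminus_0_r in Hd'. apply Rabs_def2 in Hd'.
  assert (0 <= g y / (b - y)) by (apply Rdiv_le_0_compat; [apply Hg|]; lra).
  replace (g y / (y - b)) with (- (g y / (b - y))) in Hd' by (field; lra).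
  lra.
Qed.

Lemma slope_at_left_zero a b g g' : a < b ->
  (forall y, a <= y <= b -> 0 <= g y) -> g a = 0 -> is_deriv_on a b g g' -> 0 <= g' a.
Proof.
  intros Hab Hg Ha Hd. destruct (Rle_dec 0 (g' a)) as [|Hneg]; auto. exfalso.
  destruct (is_deriv_on_eps a b g g' a Hd ltac:(lra) (- g' a) ltac:(lra)) as [d [Hd0 Hd']].
  set (y := a + Rmin d (b - a) / 2).
  assert (Hy : a < y <= b /\ y - a < d).
  { pose proof (Rmin_l d (b - a)). pose proof (Rmin_r d (b - a)).
    assert (0 < Rmin d (b - a)) by (apply Rmin_glb_lt; lra). unfold y; lra. }
  specialize (Hd' y ltac:(lra) ltac:(lra) ltac:(apply Rabs_def1; lra)).
  rewrite Ha, Rminus_0_r in Hd'. apply Rabs_def2 in Hd'.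
  assert (0 <= g y / (y - a)) by (apply Rdiv_le_0_compat; [apply Hg|]; lra).
  lra.
Qed.

(* Two elementary hyperbolic inequalities, needed for the sign of the
   barrier slopes: sinh u > u and tanh u <= u for u > 0. *)
Lemma sinh_gt_id u : 0 < u -> u < sinh u.
Proof.
  intros Hu.
  destruct (MVT_cor2 (fun x => sinh x - x) (fun x => cosh x - 1) 0 u) as [c [Hc Hc']];
    [lra| |].
  { intros c _. apply is_derive_Reals. unfold sinh, cosh. auto_derive; auto. field. }
  assert (Hcosh : 1 < cosh c).
  { unfold cosh. pose proof (exp_ineq1 c ltac:(lra)).
    pose proof (exp_ineq1 (- c) ltac:(lra)). lra. }
  rewrite sinh_0 in Hc. nra.
Qed.

Lemma sinh_le_id_cosh u : 0 <= u -> sinh u <= u * cosh u.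
Proof.
  intros [Hu| <-]; [|rewrite sinh_0; lra].
  destruct (MVT_cor2 (fun x => x * cosh x - sinh x) (fun x => x * sinh x) 0 u)
    as [c [Hc Hc']]; [lra| |].
  { intros c _. apply is_derive_Reals. unfold sinh, cosh. auto_derive; auto. field. }
  assert (0 < sinh c) by (rewrite <- sinh_0; apply sinh_lt; lra).
  assert (0 <= c * sinh c * (u - 0)) by (apply Rmult_le_pos; [apply Rmult_le_pos|]; lra).
  rewrite sinh_0 in Hc. lra.
Qed.

(* Their endpoint slopes w'(c -+ H) = rho (p +- tau M), with rho > 0 and
   tau <= H^2, will bound the slope of the interpolation error at a knot. *)
Inductive barrier (K c H p M : R) : Prop :=
  Barrier (rho tau : R) (v v1 v2 w w1 w2 : R -> R) :
    0 < rho -> tau <= H ^ 2 ->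
    (forall x, is_derive v x (v1 x)) -> (forall x, is_derive v1 x (v2 x)) ->
    (forall x, is_derive w x (w1 x)) -> (forall x, is_derive w1 x (w2 x)) ->
    (forall x, v2 x - K * v x = M) -> (forall x, w2 x - K * w x = v x) ->
    v (c - H) = - p -> v (c + H) = p -> w (c - H) = 0 -> w (c + H) = 0 ->
    w1 (c + H) = rho * (p - tau * M) -> w1 (c - H) = rho * (p + tau * M) ->
    barrier K c H p M.

Lemma barrier_K0 c H p M : 0 < H -> barrier 0 c H p M.
Proof.
  intros HH.
  apply (Barrier 0 c H p M (H / 3) (H ^ 2)
    (fun x => p * (x - c) / H - M * (H ^ 2 - (x - c) ^ 2) / 2)
    (fun x => p / H + M * (x - c))
    (fun _ => M)
    (fun x => p * ((x - c) ^ 3 - H ^ 2 * (x - c)) / (6 * H)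
            - M * (H ^ 2 * (x - c) ^ 2 / 2 - (x - c) ^ 4 / 12) / 2 + 5 * M * H ^ 4 / 24)
    (fun x => p * (3 * (x - c) ^ 2 - H ^ 2) / (6 * H)
            - M * (H ^ 2 * (x - c) - (x - c) ^ 3 / 3) / 2)
    (fun x => p * (x - c) / H - M * (H ^ 2 - (x - c) ^ 2) / 2));
  try lra; try intros x; try (auto_derive; auto); field; lra.
Qed.

Lemma sinh_opp x : sinh (- x) = - sinh x.
Proof. unfold sinh. rewrite Ropp_involutive. field. Qed.

Lemma cosh_opp x : cosh (- x) = cosh x.
Proof. unfold cosh. rewrite Ropp_involutive. field. Qed.

Lemma sinh_double u : sinh (2 * u) = 2 * sinh u * cosh u.
Proof.
  unfold sinh, cosh. replace (2 * u) with (u + u) by ring.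
  rewrite exp_plus, Ropp_plus_distr, exp_plus. field.
Qed.

(* K = xi^2 > 0: hyperbolic barriers, with S = sinh (xi H), C = cosh (xi H)
   and A chosen so that w vanishes at c -+ H. *)
Section HyperbolicBarrier.
Variables xi c H p M S C A : R.
Hypothesis Hxi : xi <> 0.
Hypothesis HS : S <> 0.
Hypothesis HC : C <> 0.

Let sh x := sinh (xi * (x - c)).
Let ch x := cosh (xi * (x - c)).

Definition hv x := p * sh x / S - M * (1 - ch x / C) / (xi * xi).
Definition hv1 x := p * xi * ch x / S + M * sh x / (xi * C).
Definition hv2 x := p * xi * xi * sh x / S + M * ch x / C.
Definition hw x := p * ((x - c) * ch x / (2 * xi) - H * C * sh x / (2 * xi * S)) / S
  + M * (1 / xi ^ 4 + (x - c) * sh x / (2 * xi ^ 3 * C) + A * ch x).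
Definition hw1 x := p * ((ch x + xi * (x - c) * sh x) / (2 * xi) - H * C * ch x / (2 * S)) / S
  + M * ((sh x + xi * (x - c) * ch x) / (2 * xi ^ 3 * C) + A * xi * sh x).
Definition hw2 x := p * (sh x + xi * (x - c) * ch x / 2 - H * C * xi * sh x / (2 * S)) / S
  + M * ((2 * xi * ch x + xi ^ 2 * (x - c) * sh x) / (2 * xi ^ 3 * C) + A * xi ^ 2 * ch x).

Lemma hv_derive x : is_derive hv x (hv1 x).
Proof. unfold hv, hv1, sh, ch, sinh, cosh. auto_derive; auto.
  change (x + - c) with (x - c). field. auto. Qed.
Lemma hv1_derive x : is_derive hv1 x (hv2 x).
Proof. unfold hv1, hv2, sh, ch, sinh, cosh. auto_derive; auto.
  change (x + - c) with (x - c). field. auto. Qed.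
Lemma hw_derive x : is_derive hw x (hw1 x).
Proof. unfold hw, hw1, sh, ch, sinh, cosh. auto_derive; auto.
  change (x + - c) with (x - c). field. auto. Qed.
Lemma hw1_derive x : is_derive hw1 x (hw2 x).
Proof. unfold hw1, hw2, sh, ch, sinh, cosh. auto_derive; auto.
  change (x + - c) with (x - c). field. auto. Qed.
Lemma hv_equation x : hv2 x - xi * xi * hv x = M.
Proof. unfold hv, hv2. field. auto. Qed.
Lemma hw_equation x : hw2 x - xi * xi * hw x = hv x.
Proof. unfold hw, hw2, hv. field. auto. Qed.
End HyperbolicBarrier.

(* The hyperbolic barrier: rho > 0 is sinh (2 xi H) > 2 xi H, and
   tau <= H^2 is tanh (xi H) <= xi H. *)
Lemma barrier_hyperbolic xi c H p M : 0 < xi -> 0 < H -> barrier (xi * xi) c H p M.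
Proof.
  intros Hxi HH.
  set (E := exp (xi * H)). set (S := sinh (xi * H)). set (C := cosh (xi * H)).
  assert (HE : 1 < E) by (unfold E; rewrite <- exp_0; apply exp_increasing; nra).
  assert (HSe : S = (E - / E) / 2) by (unfold S, sinh, E; rewrite exp_Ropp; reflexivity).
  assert (HCe : C = (E + / E) / 2) by (unfold C, cosh, E; rewrite exp_Ropp; reflexivity).
  assert (HEi : 0 < / E < 1).
  { split; [apply Rinv_0_lt_compat; lra|]. rewrite <- Rinv_1. apply Rinv_lt_contravar; lra. }
  assert (HSp : 0 < S) by (rewrite HSe; lra).
  assert (HCp : 0 < C) by (rewrite HCe; lra).
  assert (Hrho : xi * H < S * C).
  { assert (Hg := sinh_gt_id (2 * (xi * H)) ltac:(nra)).
    rewrite sinh_double in Hg. fold S C in Hg. lra. }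
  assert (Htanh : S <= xi * H * C) by (apply sinh_le_id_cosh; nra).
  set (A := - (1 / xi ^ 4 + H * S / (2 * xi ^ 3 * C)) / C).
  assert (Hend : sinh (xi * (c + H - c)) = S /\ cosh (xi * (c + H - c)) = C /\
     sinh (xi * (c - H - c)) = - S /\ cosh (xi * (c - H - c)) = C).
  { replace (c + H - c) with H by ring. replace (c - H - c) with (- H) by ring.
    rewrite <- Ropp_mult_distr_r, sinh_opp, cosh_opp. fold S C. auto. }
  destruct Hend as [Hs1 [Hc1 [Hs2 Hc2]]].
  apply (Barrier (xi * xi) c H p M ((S * C - xi * H) / (2 * xi * S ^ 2))
    (S ^ 2 / (xi ^ 2 * C ^ 2))
    (hv xi c p M S C) (hv1 xi c p M S C) (hv2 xi c p M S C)
    (hw xi c H p M S C A) (hw1 xi c H p M S C A) (hw2 xi c H p M S C A)).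
  - apply Rdiv_lt_0_compat; [lra|]. apply Rmult_lt_0_compat; [lra|]. apply pow_lt; lra.
  - apply (Rmult_le_reg_r (xi ^ 2 * C ^ 2)); [nra|].
    unfold Rdiv. rewrite Rmult_assoc, Rinv_l by (apply Rmult_integral_contrapositive;
      split; apply pow_nonzero; lra). nra.
  - intros x. apply hv_derive; lra.
  - intros x. apply hv1_derive; lra.
  - intros x. apply hw_derive; lra.
  - intros x. apply hw1_derive; lra.
  - intros x. apply hv_equation; lra.
  - intros x. apply hw_equation; lra.
  - unfold hv. rewrite Hs2, Hc2. field. lra.
  - unfold hv. rewrite Hs1, Hc1. field. lra.
  - unfold hw, A. rewrite Hs2, Hc2. field. lra.
  - unfold hw, A. rewrite Hs1, Hc1. field. lra.
  (* the slope identities use cosh^2 - sinh^2 = 1, hence the expansion in E *)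
  - unfold hw1, A. rewrite Hs1, Hc1, HSe, HCe. field; repeat split; intro Hc; nra.
  - unfold hw1, A. rewrite Hs2, Hc2, HSe, HCe. field; repeat split; intro Hc; nra.
Qed.

Lemma barrier_exists K c H p M : 0 <= K -> 0 < H -> barrier K c H p M.
Proof.
  intros [HK| <-] HH; [|apply barrier_K0; auto].
  rewrite <- (sqrt_sqrt K) by lra. apply barrier_hyperbolic; auto. apply sqrt_lt_R0; auto.
Qed.

Lemma two_point_bound K G m a b phi phi1 phi2 :
  0 <= K -> a < b -> 0 <= m -> 0 <= G -> cont_on a b phi ->
  (forall x, a < x < b -> is_derive phi x (phi1 x)) ->
  (forall x, a < x < b -> is_derive phi1 x (phi2 x)) ->
  (forall x, a < x < b -> Rabs (phi2 x - K * phi x) <= G) ->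
  Rabs (phi a) <= m -> Rabs (phi b) <= m ->
  forall x, a <= x <= b -> Rabs (phi x) <= m + G * ((x - a) * (b - x)) / 2.
Proof.
  intros HK Hab Hm HG Hc Hd1 Hd2 Hop Ha Hb.
  set (q := fun x => m + G * ((x - a) * (b - x)) / 2).
  set (q1 := fun x => G * (a + b - 2 * x) / 2).
  assert (Hq1 : forall x, is_derive q x (q1 x)) by (intros x; unfold q, q1; auto_derive; auto; field).
  assert (Hq2 : forall x, is_derive q1 x (- G)) by (intros x; unfold q1; auto_derive; auto; field).
  assert (Hcq : cont_on a b q) by (apply (cont_on_derivable a b q q1); auto).
  assert (HKq : forall x, a < x < b -> 0 <= K * q x).
  { intros x Hx. apply Rmult_le_pos; auto. unfold q.
    assert (0 <= G * ((x - a) * (b - x))) by (apply Rmult_le_pos; nra). lra. }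
  apply Rabs_le_between in Ha. apply Rabs_le_between in Hb.
  (* q - phi and q + phi are supersolutions, nonnegative at the endpoints *)
  assert (Hminus : forall x, a <= x <= b -> 0 <= q x - phi x).
  { apply (max_principle K a b _ (fun x => q1 x - phi1 x) (fun x => - G - phi2 x) HK Hab).
    - apply cont_on_minus; auto.
    - intros x Hx. apply is_derive_Rminus; auto.
    - intros x Hx. apply is_derive_Rminus; auto.
    - unfold q. lra.
    - unfold q. lra.
    - intros x Hx. specialize (Hop x Hx). specialize (HKq x Hx).
      apply Rabs_le_between in Hop. lra. }
  assert (Hplus : forall x, a <= x <= b -> 0 <= q x + phi x).
  { apply (max_principle K a b _ (fun x => q1 x + phi1 x) (fun x => - G + phi2 x) HK Hab).
    - apply cont_on_plus; auto.
    - intros x Hx. apply is_derive_Rplus; auto.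
    - intros x Hx. apply is_derive_Rplus; auto.
    - unfold q. lra.
    - unfold q. lra.
    - intros x Hx. specialize (Hop x Hx). specialize (HKq x Hx).
      apply Rabs_le_between in Hop. lra. }
  intros x Hx. specialize (Hminus x Hx). specialize (Hplus x Hx). unfold q in *.
  apply Rabs_le. lra.
Qed.

Record piece (K M a b : R) (e e1 e2 u : R -> R) : Prop := {
  piece_cont_e : cont_on a b e;
  piece_cont_u : cont_on a b u;
  piece_slope : is_deriv_on a b e e1;
  piece_deriv2 : forall x, a < x < b -> is_derive e1 x (e2 x);
  piece_u_def : forall x, a < x < b -> e2 x - K * e x = u x;
  piece_u_eq : exists u1 u2 : R -> R, forall x, a < x < b ->
    is_derive u x (u1 x) /\ is_derive u1 x (u2 x) /\ Rabs (u2 x - K * u x) <= M }.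

Lemma piece_opp K M a b e e1 e2 u : piece K M a b e e1 e2 u ->
  piece K M a b (fun x => - e x) (fun x => - e1 x) (fun x => - e2 x) (fun x => - u x).
Proof.
  intros [Hce Hcu Hs Hd2 Hu [u1 [u2 Hu12]]]. split.
  - apply cont_on_opp; auto.
  - apply cont_on_opp; auto.
  - apply is_deriv_on_opp; auto.
  - intros x Hx. apply (is_derive_opp e1 x (e2 x)); auto.
  - intros x Hx. rewrite <- (Hu x Hx). ring.
  - exists (fun x => - u1 x), (fun x => - u2 x). intros x Hx.
    destruct (Hu12 x Hx) as [H1 [H2 H3]].
    split; [|split]; [apply (is_derive_opp u x (u1 x))|apply (is_derive_opp u1 x (u2 x))|]; auto.
    replace (- u2 x - K * - u x) with (- (u2 x - K * u x)) by ring. rewrite Rabs_Ropp; auto.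
Qed.

Lemma barrier_comparison K M a b e e1 e2 u v v1 v2 w w1 w2 :
  0 <= K -> a < b -> piece K M a b e e1 e2 u ->
  (forall x, is_derive v x (v1 x)) -> (forall x, is_derive v1 x (v2 x)) ->
  (forall x, is_derive w x (w1 x)) -> (forall x, is_derive w1 x (w2 x)) ->
  (forall x, v2 x - K * v x = M) -> (forall x, w2 x - K * w x = v x) ->
  v a <= u a -> v b <= u b -> e a = w a -> e b = w b ->
  forall x, a <= x <= b -> e x <= w x.
Proof.
  intros HK Hab [Hce Hcu Hs Hd2 Hu [u1 [u2 Hu12]]] Hv1 Hv2 Hw1 Hw2 Hv Hw Hva Hvb Hwa Hwb.
  assert (Hdu : forall x, a <= x <= b -> 0 <= u x - v x).
  { apply (max_principle K a b _ (fun x => u1 x - v1 x) (fun x => u2 x - v2 x) HK Hab).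
    - apply cont_on_minus; auto. apply (cont_on_derivable _ _ _ v1); auto.
    - intros x Hx. apply is_derive_Rminus; auto. apply Hu12; auto.
    - intros x Hx. apply is_derive_Rminus; auto. apply Hu12; auto.
    - lra.
    - lra.
    - intros x Hx. destruct (Hu12 x Hx) as [_ [_ Hb]]. apply Rabs_le_between in Hb.
      specialize (Hv x). lra. }
  assert (Hdw : forall x, a <= x <= b -> 0 <= w x - e x).
  { apply (max_principle K a b _ (fun x => w1 x - e1 x) (fun x => w2 x - e2 x) HK Hab).
    - apply cont_on_minus; auto. apply (cont_on_derivable _ _ _ w1); auto.
    - intros x Hx. apply is_derive_Rminus; auto. apply (is_deriv_on_interior a b); auto.
    - intros x Hx. apply is_derive_Rminus; auto.
    - lra.
    - lra.
    - intros x Hx. specialize (Hw x). specialize (Hu x Hx). specialize (Hdu x ltac:(lra)).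
      lra. }
  intros x Hx. specialize (Hdw x Hx). lra.
Qed.

Lemma barrier_slope_pos rho tau h D M m : 0 < rho -> tau <= (h / 2) ^ 2 -> 0 <= h <= D ->
  0 <= M -> D ^ 2 * M / 4 < m -> 0 < rho * (m - tau * M).
Proof.
  intros Hr Ht Hh HM Hm. apply Rmult_lt_0_compat; auto.
  assert ((h / 2) ^ 2 <= D ^ 2 / 4) by nra.
  assert (tau * M <= D ^ 2 / 4 * M) by nra.
  lra.
Qed.

Lemma slope_at_right_peak K M D m a b e e1 e2 u :
  0 <= K -> 0 <= M -> a < b -> b - a <= D -> D ^ 2 * M / 4 < m ->
  piece K M a b e e1 e2 u -> e a = 0 -> e b = 0 -> - m <= u a -> u b = m ->
  0 < e1 b.
Proof.
  intros HK HM Hab HD Hm Hp Hea Heb Hua Hub.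
  destruct (barrier_exists K ((a + b) / 2) ((b - a) / 2) m M HK ltac:(lra))
    as [rho tau v v1 v2 w w1 w2 Hrho Htau Hv1 Hv2 Hw1 Hw2 Hv Hw Hva Hvb Hwa Hwb Hs _].
  replace ((a + b) / 2 - (b - a) / 2) with a in * by field.
  replace ((a + b) / 2 + (b - a) / 2) with b in * by field.
  assert (Hle := barrier_comparison K M a b e e1 e2 u v v1 v2 w w1 w2 HK Hab Hp
    Hv1 Hv2 Hw1 Hw2 Hv Hw ltac:(lra) ltac:(lra) ltac:(lra) ltac:(lra)).
  assert (Hslope : w1 b - e1 b <= 0).
  { apply (slope_at_right_zero a b (fun x => w x - e x) (fun x => w1 x - e1 x)); auto.
    - intros y Hy. specialize (Hle y Hy). lra.
    - lra.
    - apply is_deriv_on_minus; [apply is_deriv_on_derivable; auto|apply (piece_slope _ _ _ _ _ _ _ _ Hp)]. }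
  assert (Hpos := barrier_slope_pos rho tau (b - a) D M m Hrho Htau ltac:(lra) HM Hm).
  lra.
Qed.

Lemma slope_at_left_peak K M D m a b e e1 e2 u :
  0 <= K -> 0 <= M -> a < b -> b - a <= D -> D ^ 2 * M / 4 < m ->
  piece K M a b e e1 e2 u -> e a = 0 -> e b = 0 -> u a = m -> - m <= u b ->
  e1 a < 0.
Proof.
  intros HK HM Hab HD Hm Hp Hea Heb Hua Hub.
  destruct (barrier_exists K ((a + b) / 2) ((b - a) / 2) (- m) M HK ltac:(lra))
    as [rho tau v v1 v2 w w1 w2 Hrho Htau Hv1 Hv2 Hw1 Hw2 Hv Hw Hva Hvb Hwa Hwb _ Hs].
  replace ((a + b) / 2 - (b - a) / 2) with a in * by field.
  replace ((a + b) / 2 + (b - a) / 2) with b in * by field.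
  assert (Hle := barrier_comparison K M a b e e1 e2 u v v1 v2 w w1 w2 HK Hab Hp
    Hv1 Hv2 Hw1 Hw2 Hv Hw ltac:(lra) ltac:(lra) ltac:(lra) ltac:(lra)).
  assert (Hslope : 0 <= w1 a - e1 a).
  { apply (slope_at_left_zero a b (fun x => w x - e x) (fun x => w1 x - e1 x)); auto.
    - intros y Hy. specialize (Hle y Hy). lra.
    - lra.
    - apply is_deriv_on_minus; [apply is_deriv_on_derivable; auto|apply (piece_slope _ _ _ _ _ _ _ _ Hp)]. }
  assert (Hpos := barrier_slope_pos rho tau (b - a) D M m Hrho Htau ltac:(lra) HM Hm).
  lra.
Qed.

Lemma knots_mono (t : nat -> R) n : (forall j, (1 <= j < n)%nat -> t j < t (S j)) ->
  forall i j, (1 <= i <= j)%nat -> (j <= n)%nat -> t i <= t j.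
Proof.
  intros Ht i j Hij Hjn. induction j as [|j IH]; [lia|].
  destruct (Nat.eq_dec i (S j)) as [->|Hne]; [lra|].
  assert (t j < t (S j)) by (apply Ht; lia).
  assert (t i <= t j) by (apply IH; lia). lra.
Qed.

Lemma maxgap_nonneg t k : 0 <= maxgap t k.
Proof. induction k; simpl; [lra|]. eapply Rle_trans; [apply IHk|apply Rmax_l]. Qed.

Lemma gap_le_maxgap t k j : (1 <= j <= k)%nat -> t (S j) - t j <= maxgap t k.
Proof.
  induction k as [|k IH]; intros Hj; [lia|]. simpl.
  destruct (Nat.eq_dec j (S k)) as [->|Hne]; [apply Rmax_r|].
  eapply Rle_trans; [apply IH; lia|apply Rmax_l].
Qed.

Lemma gap_le_mesh t n j : (1 <= j < n)%nat -> t (S j) - t j <= mesh t n.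
Proof. intros. unfold mesh. apply gap_le_maxgap. lia. Qed.

Lemma argmax_nat (f : nat -> R) n : (1 <= n)%nat ->
  exists j, (1 <= j <= n)%nat /\ forall k, (1 <= k <= n)%nat -> f k <= f j.
Proof.
  induction n as [|n IH]; intros Hn; [lia|].
  destruct (Nat.eq_dec n 0) as [->|Hn0].
  - exists 1%nat. split; [lia|]. intros k Hk. replace k with 1%nat by lia. lra.
  - destruct (IH ltac:(lia)) as [j [Hj Hjm]].
    destruct (Rle_dec (f (S n)) (f j)).
    + exists j. split; [lia|]. intros k Hk.
      destruct (Nat.eq_dec k (S n)) as [->|]; auto. apply Hjm; lia.
    + exists (S n). split; [lia|]. intros k Hk.
      destruct (Nat.eq_dec k (S n)) as [->|]; [lra|]. specialize (Hjm k ltac:(lia)). lra.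
Qed.

Lemma locate_piece (t : nat -> R) n x : (2 <= n)%nat ->
  t 1%nat <= x <= t n -> exists j, (1 <= j < n)%nat /\ t j <= x <= t (S j).
Proof.
  intros Hn. induction n as [|n IH]; intros Hx; [lia|].
  destruct (Nat.eq_dec n 1) as [->|Hn1]; [exists 1%nat; split; [lia|auto]|].
  destruct (Rle_dec x (t n)) as [Hle|Hgt].
  - destruct IH as [j [Hj Hj']]; [lia|lra|]. exists j. split; [lia|auto].
  - exists n. split; [lia|lra].
Qed.

Lemma bump_le a b D x : 0 <= b - a <= D -> a <= x <= b -> (x - a) * (b - x) <= D ^ 2 / 4.
Proof.
  intros Hab Hx.
  assert ((x - a) * (b - x) <= (b - a) ^ 2 / 4) by (pose proof (pow2_ge_0 ((x - a) - (b - x))); nra).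
  assert ((b - a) ^ 2 <= D ^ 2) by (apply pow_incr; lra). lra.
Qed.

Record interp_error (K M : R) (n : nat) (t : nat -> R) (e e1 e2 u : R -> R) : Prop := {
  error_piece : forall j, (1 <= j < n)%nat -> piece K M (t j) (t (S j)) e e1 e2 u;
  error_knot : forall j, (1 <= j <= n)%nat -> e (t j) = 0;
  error_slope_first : e1 (t 1%nat) = 0;
  error_slope_last : e1 (t n) = 0 }.

Lemma interp_error_opp K M n t e e1 e2 u : interp_error K M n t e e1 e2 u ->
  interp_error K M n t (fun x => - e x) (fun x => - e1 x) (fun x => - e2 x) (fun x => - u x).
Proof.
  intros [Hp Hk H1 Hn]. split.
  - intros j Hj. apply piece_opp; auto.
  - intros j Hj. rewrite Hk; auto. ring.
  - rewrite H1. ring.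
  - rewrite Hn. ring.
Qed.

Section ErrorBound.
Variables (K M : R) (n : nat) (t : nat -> R).
Hypothesis HK : 0 <= K.
Hypothesis HM : 0 <= M.
Hypothesis Hn : (2 <= n)%nat.
Hypothesis Ht : forall j, (1 <= j < n)%nat -> t j < t (S j).

Let D := mesh t n.

(* At a knot where u attains the largest knot value m of |u|, m <= D^2 M / 4:
   otherwise e would have to increase into that knot and decrease out of it,
   which the end conditions e1 = 0 rule out at t_1 and t_n. *)
Lemma knot_peak_bound e e1 e2 u j m : interp_error K M n t e e1 e2 u ->
  (1 <= j <= n)%nat -> u (t j) = m ->
  (forall k, (1 <= k <= n)%nat -> Rabs (u (t k)) <= m) -> m <= D ^ 2 * M / 4.
Proof.
  intros [Hp Hk Hfirst Hlast] Hj Hu Hmax.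
  destruct (Rle_dec m (D ^ 2 * M / 4)) as [|Hgt]; auto. exfalso. apply Rnot_le_lt in Hgt.
  assert (Hneighbor : forall k, (1 <= k <= n)%nat -> - m <= u (t k)).
  { intros k Hk'. specialize (Hmax k Hk'). apply Rabs_le_between in Hmax. lra. }
  assert (Hinto : (2 <= j)%nat -> 0 < e1 (t j)).
  { intros Hj2. destruct j as [|i]; [lia|].
    apply (slope_at_right_peak K M D m (t i) (t (S i)) e e1 e2 u); auto.
    - apply Ht; lia.
    - apply gap_le_mesh; lia.
    - apply Hp; lia.
    - apply Hk; lia.
    - apply Hneighbor; lia. }
  assert (Hout : (j < n)%nat -> e1 (t j) < 0).
  { intros Hjn. apply (slope_at_left_peak K M D m (t j) (t (S j)) e e1 e2 u); auto.
    - apply Ht; lia.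
    - apply gap_le_mesh; lia.
    - apply Hp; lia.
    - apply Hk; lia.
    - apply Hneighbor; lia. }
  destruct (Nat.eq_dec j 1) as [->|Hj1].
  - specialize (Hout ltac:(lia)). lra.
  - destruct (Nat.eq_dec j n) as [->|Hjn].
    + specialize (Hinto ltac:(lia)). lra.
    + specialize (Hinto ltac:(lia)). specialize (Hout ltac:(lia)). lra.
Qed.

(* Bound on u at the knots, applying the peak argument to e or to -e. *)
Lemma knot_values_bound e e1 e2 u : interp_error K M n t e e1 e2 u ->
  forall k, (1 <= k <= n)%nat -> Rabs (u (t k)) <= D ^ 2 * M / 4.
Proof.
  intros He.
  destruct (argmax_nat (fun k => Rabs (u (t k))) n ltac:(lia)) as [j [Hj Hmax]].
  assert (Hpeak : Rabs (u (t j)) <= D ^ 2 * M / 4).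
  { destruct (Rle_dec 0 (u (t j))) as [Hpos|Hneg].
    - apply (knot_peak_bound e e1 e2 u j); auto. rewrite Rabs_pos_eq; auto.
    - apply (knot_peak_bound (fun x => - e x) (fun x => - e1 x) (fun x => - e2 x)
        (fun x => - u x) j); auto.
      + apply interp_error_opp; auto.
      + rewrite Rabs_left; auto. lra.
      + intros k Hk. rewrite Rabs_Ropp. apply Hmax; auto. }
  intros k Hk. specialize (Hmax k Hk). simpl in Hmax. lra.
Qed.

Lemma u_bound e e1 e2 u : interp_error K M n t e e1 e2 u ->
  forall j, (1 <= j < n)%nat -> forall y, t j <= y <= t (S j) ->
  Rabs (u y) <= 3 / 8 * D ^ 2 * M.
Proof.
  intros He j Hj y Hy.
  destruct (error_piece _ _ _ _ _ _ _ _ He j Hj) as [_ Hcu _ _ _ [u1 [u2 Hu]]].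
  assert (Hab : t j < t (S j)) by (apply Ht; lia).
  assert (Hbump := bump_le (t j) (t (S j)) D y
    ltac:(split; [lra|apply gap_le_mesh; lia]) Hy).
  assert (Hb := two_point_bound K M (D ^ 2 * M / 4) (t j) (t (S j)) u u1 u2 HK Hab ltac:(apply Rmult_le_pos; [|lra]; apply Rmult_le_pos; [apply pow2_ge_0|lra])
    HM Hcu ltac:(intros z Hz; apply Hu; auto) ltac:(intros z Hz; apply Hu; auto)
    ltac:(intros z Hz; apply Hu; auto)
    ltac:(apply (knot_values_bound e e1 e2 u); auto; lia)
    ltac:(apply (knot_values_bound e e1 e2 u); auto; lia) y Hy).
  assert (M * ((y - t j) * (t (S j) - y)) <= M * (D ^ 2 / 4)) by (apply Rmult_le_compat_l; auto).
  lra.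
Qed.

Lemma interp_error_bound e e1 e2 u : interp_error K M n t e e1 e2 u ->
  forall x, t 1%nat <= x <= t n -> Rabs (e x) <= 3 / 64 * D ^ 4 * M.
Proof.
  intros He x Hx.
  destruct (locate_piece t n x Hn Hx) as [j [Hj Hxj]].
  destruct (error_piece _ _ _ _ _ _ _ _ He j Hj) as [Hce _ Hs Hd2 Hu _].
  assert (Hab : t j < t (S j)) by (apply Ht; lia).
  set (W := 3 / 8 * D ^ 2 * M).
  assert (HW : 0 <= W) by (unfold W; apply Rmult_le_pos; [|lra]; apply Rmult_le_pos; [lra|apply pow2_ge_0]).
  assert (Hbump := bump_le (t j) (t (S j)) D x
    ltac:(split; [lra|apply gap_le_mesh; lia]) Hxj).
  assert (Hb := two_point_bound K W 0 (t j) (t (S j)) e e1 e2 HK Hab ltac:(lra) HW Hce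
    ltac:(intros z Hz; apply (is_deriv_on_interior (t j) (t (S j))); auto) Hd2
    ltac:(intros z Hz; rewrite Hu; [apply (u_bound e e1 e2 u He j Hj)|]; lra)
    ltac:(rewrite (error_knot _ _ _ _ _ _ _ _ He j); [|lia]; rewrite Rabs_R0; lra)
    ltac:(rewrite (error_knot _ _ _ _ _ _ _ _ He (S j)); [|lia]; rewrite Rabs_R0; lra) x Hxj).
  assert (W * ((x - t j) * (t (S j) - x)) <= W * (D ^ 2 / 4)) by (apply Rmult_le_compat_l; auto).
  unfold W in *. lra.
Qed.
End ErrorBound.

Lemma Lop_cons l ls f P P' x : (forall y, Lop ls f y = P y) -> is_derive P x P' ->
  Lop (l :: ls) f x = P' - l * P x.
Proof.
  intros HP HP'. simpl. rewrite (Derive_ext _ _ x HP), (is_derive_unique _ _ _ HP'), HP.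
  reflexivity.
Qed.

Lemma Derive_n_derive E k x : ex_derive_n E (S k) x ->
  is_derive (Derive_n E k) x (Derive_n E (S k) x).
Proof. intros H. apply Derive_correct. exact H. Qed.

Ltac derive_linear :=
  repeat first [apply is_derive_Rminus | apply is_derive_Rplus | apply is_derive_scal].

Lemma Lop_expand E xi x : (forall k y, (k <= 4)%nat -> ex_derive_n E k y) ->
  Lop [xi; xi; - xi; - xi] E x =
  Derive_n E 4 x - 2 * xi ^ 2 * Derive_n E 2 x + xi ^ 4 * E x.
Proof.
  intros HE. set (D := Derive_n E).
  assert (Hd : forall k y, (k <= 3)%nat -> is_derive (D k) y (D (S k) y)).
  { intros k y Hk. apply Derive_n_derive, HE. lia. }
  assert (H1 : forall y, Lop [- xi] E y = D 1%nat y + xi * D 0%nat y).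
  { intros y. rewrite (Lop_cons _ _ _ (D 0%nat) (D 1%nat y) y); [ring|reflexivity|].
    apply Hd; lia. }
  assert (H2 : forall y, Lop [- xi; - xi] E y =
    D 2%nat y + 2 * xi * D 1%nat y + xi ^ 2 * D 0%nat y).
  { intros y. rewrite (Lop_cons _ _ _ _ (D 2%nat y + xi * D 1%nat y) y H1); [ring|].
    derive_linear; apply Hd; lia. }
  assert (H3 : forall y, Lop [xi; - xi; - xi] E y =
    D 3%nat y + xi * D 2%nat y - xi ^ 2 * D 1%nat y - xi ^ 3 * D 0%nat y).
  { intros y.
    rewrite (Lop_cons _ _ _ _ (D 3%nat y + 2 * xi * D 2%nat y + xi ^ 2 * D 1%nat y) y H2);
      [ring|].
    derive_linear; apply Hd; lia. }
  rewrite (Lop_cons _ _ _ _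
    (D 4%nat x + xi * D 3%nat x - xi ^ 2 * D 2%nat x - xi ^ 3 * D 1%nat x) x H3);
    [unfold D; simpl; ring|].
  derive_linear; apply Hd; lia.
Qed.

Lemma locally_open_interval a b y : a < y < b -> locally y (fun z => a < z < b).
Proof.
  intros Hy. assert (Hp : 0 < Rmin (y - a) (b - y)) by (apply Rmin_glb_lt; lra).
  exists (mkposreal _ Hp). intros z Hz. change (Rabs (z - y) < Rmin (y - a) (b - y)) in Hz.
  pose proof (Rmin_l (y - a) (b - y)). pose proof (Rmin_r (y - a) (b - y)).
  apply Rabs_def2 in Hz. lra.
Qed.

Lemma is_derive_open_ext a b (f g : R -> R) y l : a < y < b ->
  (forall z, a < z < b -> f z = g z) -> is_derive f y l -> is_derive g y l.
Proof.
  intros Hy Hfg. apply is_derive_ext_loc.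
  eapply filter_imp; [|apply (locally_open_interval a b y Hy)]. exact Hfg.
Qed.

Lemma second_derivative_agrees a b a' b' I dI E y :
  a <= a' -> b' <= b -> Ck_on 2 a b I dI ->
  (forall k z, (k <= 2)%nat -> ex_derive_n E k z) ->
  (forall x, a' <= x <= b' -> I x = E x) -> a' < y < b' -> dI 2%nat y = Derive_n E 2 y.
Proof.
  intros Ha Hb [HI0 [HId _]] HEd HIE Hy.
  assert (HIi : forall k z, (k < 2)%nat -> a' < z < b' -> is_derive (dI k) z (dI (S k) z)).
  { intros k z Hk Hz. apply (is_deriv_on_interior a b); [apply HId; auto|lra]. }
  assert (HI1E : forall z, a' < z < b' -> dI 1%nat z = Derive_n E 1 z).
  { intros z Hz. symmetry. apply is_derive_unique.
    apply (is_derive_open_ext a' b' (dI 0%nat)); auto.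
    intros w Hw. rewrite HI0. apply HIE. lra. }
  symmetry. apply is_derive_unique. apply (is_derive_open_ext a' b' (dI 1%nat)); auto.
Qed.

(* On one interval [a',b'] of a spline I that agrees there with an element E
   of E(xi,xi,-xi,-xi), the error F - I satisfies the hypotheses of [piece]:
   u = (D^2 - xi^2)(F - I) has (D^2 - xi^2) u = L F, since L E = 0. *)
Lemma spline_piece xi M a b a' b' F dF I dI E :
  a <= a' -> a' < b' -> b' <= b ->
  Ck_on 4 a b F dF -> Ck_on 2 a b I dI ->
  Espace [xi; xi; - xi; - xi] E -> (forall x, a' <= x <= b' -> I x = E x) ->
  (forall theta, a <= theta <= b ->
     Rabs (dF 4%nat theta - 2 * xi ^ 2 * dF 2%nat theta + xi ^ 4 * F theta) <= M) ->
  piece (xi ^ 2) M a' b' (fun y => dF 0%nat y - dI 0%nat y) (fun y => dF 1%nat y - dI 1%nat y)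
    (fun y => dF 2%nat y - dI 2%nat y)
    (fun y => (dF 2%nat y - dI 2%nat y) - xi ^ 2 * (dF 0%nat y - dI 0%nat y)).
Proof.
  intros Ha Hab Hb [HF0 [HFd HFc]] [HI0 [HId HIc]] [HEd [_ HL]] HIE HM. simpl in HEd.
  set (D := Derive_n E).
  assert (Hd : forall k y, (k <= 3)%nat -> is_derive (D k) y (D (S k) y)).
  { intros k y Hk. apply Derive_n_derive, HEd. lia. }
  assert (HFi : forall k y, (k < 4)%nat -> a' < y < b' -> is_derive (dF k) y (dF (S k) y)).
  { intros k y Hk Hy. apply (is_deriv_on_interior a b); [apply HFd; auto|lra]. }
  assert (HIi : forall k y, (k < 2)%nat -> a' < y < b' -> is_derive (dI k) y (dI (S k) y)).
  { intros k y Hk Hy. apply (is_deriv_on_interior a b); [apply HId; auto|lra]. }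
  assert (HI0E : forall z, a' < z < b' -> dI 0%nat z = D 0%nat z).
  { intros z Hz. rewrite HI0. apply HIE. lra. }
  assert (HI2E : forall z, a' < z < b' -> dI 2%nat z = D 2%nat z).
  { intros z Hz. apply (second_derivative_agrees a b a' b' I dI E); auto.
    split; auto. }
  assert (HFc' : forall k, (k <= 4)%nat -> cont_on a b (dF k)) by (intros k Hk x; apply HFc, Hk).
  assert (HIc' : forall k, (k <= 2)%nat -> cont_on a b (dI k)) by (intros k Hk x; apply HIc, Hk).
  split.
  - apply (cont_on_sub a b); auto. apply cont_on_minus; [apply HFc'|apply HIc']; lia.
  - apply (cont_on_sub a b); auto.
    apply cont_on_minus; [|apply cont_on_scal];
      (apply cont_on_minus; [apply HFc'|apply HIc']; lia).
  - apply (is_deriv_on_sub a b); auto. apply is_deriv_on_minus; [apply HFd|apply HId]; lia.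
  - intros y Hy. apply is_derive_Rminus; [apply HFi|apply HIi]; auto.
  - intros y Hy. reflexivity.
  - exists (fun y => (dF 3%nat y - D 3%nat y) - xi ^ 2 * (dF 1%nat y - D 1%nat y)),
      (fun y => (dF 4%nat y - D 4%nat y) - xi ^ 2 * (dF 2%nat y - D 2%nat y)).
    intros y Hy. split; [|split].
    + apply (is_derive_open_ext a' b'
        (fun z => (dF 2%nat z - D 2%nat z) - xi ^ 2 * (dF 0%nat z - D 0%nat z))); auto.
      * intros z Hz. rewrite HI2E, HI0E by auto. reflexivity.
      * derive_linear; [apply HFi|apply Hd|apply HFi|apply Hd]; auto; lia.
    + derive_linear; [apply HFi|apply Hd|apply HFi|apply Hd]; auto; lia.
    + assert (HLy := HL y). rewrite Lop_expand in HLy by (intros; apply HEd; lia).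
      eapply Rle_trans; [apply Req_le, f_equal|apply (HM y); lra].
      rewrite HI2E, HI0E, <- HF0 by auto.
      transitivity (dF 4%nat y - 2 * xi ^ 2 * dF 2%nat y + xi ^ 4 * dF 0%nat y
        - (D 4%nat y - 2 * xi ^ 2 * D 2%nat y + xi ^ 4 * E y)); [unfold D; simpl; ring|].
      unfold D. rewrite HLy. ring.
Qed.

Theorem mainTheorem1 (xi : R) (n : nat) (t : nat -> R)
  (F : R -> R) (dF : nat -> R -> R) (I4F : R -> R) (dI : nat -> R -> R) :
  (2 <= n)%nat ->
  (forall j, (1 <= j < n)%nat -> t j < t (S j)) ->
  Ck_on 4 (t 1%nat) (t n) F dF ->
  exp_spline [xi; xi; - xi; - xi] t n I4F ->
  Ck_on 2 (t 1%nat) (t n) I4F dI ->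
  (forall j, (1 <= j <= n)%nat -> I4F (t j) = F (t j)) ->
  dI 1%nat (t 1%nat) = dF 1%nat (t 1%nat) ->
  dI 1%nat (t n) = dF 1%nat (t n) ->
  forall M : R,
  (forall theta, t 1%nat <= theta <= t n ->
     Rabs (dF 4%nat theta - 2 * xi ^ 2 * dF 2%nat theta + xi ^ 4 * F theta) <= M) ->
  forall x, t 1%nat <= x <= t n ->
    Rabs (F x - I4F x) <= 5 / 64 * mesh t n ^ 4 * M.
Proof.
  intros Hn Ht HF [_ Hspl] HI Hint Hd1 Hdn M HM x Hx.
  assert (HM0 : 0 <= M) by (eapply Rle_trans; [apply Rabs_pos|apply (HM x Hx)]).
  assert (Hmono := knots_mono t n Ht).
  set (e := fun y => dF 0%nat y - dI 0%nat y).
  set (e2 := fun y => dF 2%nat y - dI 2%nat y).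
  assert (Herr : interp_error (xi ^ 2) M n t e (fun y => dF 1%nat y - dI 1%nat y) e2
    (fun y => e2 y - xi ^ 2 * e y)).
  { split.
    - intros j Hj. destruct (Hspl j Hj) as [E [HE HIE]].
      apply (spline_piece xi M (t 1%nat) (t n) _ _ F dF I4F dI E); auto; apply Hmono; lia.
    - intros j Hj. unfold e. rewrite (proj1 HF), (proj1 HI), Hint; auto. ring.
    - rewrite Hd1. ring.
    - rewrite Hdn. ring. }
  assert (Hbound := interp_error_bound (xi ^ 2) M n t ltac:(nra) HM0 Hn Ht _ _ _ _ Herr x Hx).
  replace (F x - I4F x) with (e x) by (unfold e; rewrite (proj1 HF), (proj1 HI); reflexivity).
  assert (0 <= mesh t n ^ 4 * M) by (apply Rmult_le_pos; [apply pow_le, maxgap_nonneg|auto]).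
  lra.
Qed.
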